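(* Consider a finite MDP with state space $\mathcal{X}=\{1,\dots,n\}$, finite action set $\mathcal{A}$, costs $c(i,a)\in\mathbb{R}$, discount factor $\vartheta\in(0,1)$, nominal transition probability vectors $p^a_i\in\Delta_n$, confidence regions $U^a_i$ and proxy confidence regions $\widehat{U^a_i}$ as described in the context, and let $\mathrm{Q}^*$ be the robust optimal $\mathrm{Q}$-factors. Let the step lengths $\gamma_t\ge 0$ satisfy $\sum_{t=0}^\infty\gamma_t=\infty$ and $\sum_{t=0}^\infty\gamma_t^2<\infty$. Let $\beta^a_i:=\max_{y\in\widehat{U^a_i}}\min_{x\in U^a_i}\|y-x\|_1$ and $\beta:=\max_{i\in\mathcal{X},a\in\mathcal{A}}\beta^a_i$. If $\vartheta(1+\beta)<1$, then with probability $1$ the robust $\mathrm{Q}$-iteration \[ \mathrm{Q}_t(i,a)=(1-\gamma_t)\mathrm{Q}_{t-1}(i,a)+\gamma_t\Big(c(i,a)+\vartheta\,\sigma_{\widehat{U^a_i}}(v_{t-1})+\vartheta\min_{a'\in\mathcal{A}}\mathrm{Q}_{t-1}(j,a')\Big), \] where $v_{t-1}(k):=\min_{a\in\mathcal{A}}\mathrm{Q}_{t-1}(k,a)$ and $j$ is a state sampled according to $p^a_i$, converges to $\mathrm{Q}$-factors $\mathrm{Q}'$ that are $\varepsilon$-optimal, i.e. $\|\mathrm{Q}'-\mathrm{Q}^*\|_\infty\le\varepsilon\|\mathrm{Q}^*\|_\infty$, where $\varepsilon:=\dfrac{\vartheta\beta}{1-\vartheta(1+\beta)}$.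
   Context: Setting: for each state $i\in\mathcal{X}$ and action $a\in\mathcal{A}$, $p^a_i\in\Delta_n$ (the probability simplex in $\mathbb{R}^n$) is an unknown transition probability vector from which next states can only be sampled. A confidence region $U^a_i\subseteq\mathbb{R}^n$ (nonempty, compact) defines the uncertainty set $\mathcal{P}^a_i:=\{p^a_i+x\mid x\in U^a_i\}$, assumed to lie in $\Delta_n$. The proxy confidence region $\widehat{U^a_i}\supseteq U^a_i$ is a nonempty compact set (obtained by dropping the constraints that keep $\mathcal{P}^a_i$ inside the simplex); it need not satisfy $p^a_i+\widehat{U^a_i}\subseteq\Delta_n$. For $S\subseteq\mathbb{R}^n$, $\sigma_S(v):=\sup_{s\in S}s^\top v$. The robust optimal $\mathrm{Q}$-factors $\mathrm{Q}^*:\mathcal{X}\times\mathcal{A}\to\mathbb{R}$ are the solution of $\mathrm{Q}^*(i,a)=c(i,a)+\vartheta\,\sigma_{\mathcal{P}^a_i}(v^* )$ with $v^*(k)=\min_{a\in\mathcal{A}}\mathrm{Q}^*(k,a)$ (the Q-factors of the policy minimizing the worst-case expected discounted cost over transitions chosen from the sets $\mathcal{P}^a_i$). $\mathrm{Q}$-factors are viewed as $|\mathcal{X}|\times|\mathcal{A}|$ matrices and $\|\mathrm{Q}\|_\infty=\max_{i,a}|\mathrm{Q}(i,a)|$. In the iteration, $\mathrm{Q}_0$ is arbitrary and at each step the update is applied to each pair $(i,a)$ with a fresh sample $j\sim p^a_i$. *)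

From HB Require Import structures.
From mathcomp Require Import all_boot all_order all_algebra.
From mathcomp Require Import all_classical all_reals all_analysis.
Set Implicit Arguments. Unset Strict Implicit. Unset Printing Implicit Defensive.
Import Order.TTheory GRing.Theory Num.Theory.
Import numFieldNormedType.Exports.
Local Open Scope classical_set_scope.
Local Open Scope ring_scope.

Section RobustQ.
Variables (R : realType) (n : nat) (A : finType).

Definition qfactor := 'I_n -> A -> R.

Definition qnorm (Q : qfactor) : R := \big[Num.max/0]_(i : 'I_n) \big[Num.max/0]_(a : A) `|Q i a|.

(* v(k) = min_{a in A} Q(k,a) ; a0 is any action (A nonempty) *)
Definition vmin (a0 : A) (Q : qfactor) (k : 'I_n) : R :=
  \big[Num.min/Q k a0]_(a : A) Q k a.

Definition vvec (a0 : A) (Q : qfactor) : 'rV[R]_n := \row_k vmin a0 Q k.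

Definition simplex : set 'rV[R]_n :=
  [set p | (forall k, 0 <= p ord0 k) /\ \sum_k p ord0 k = 1].

Definition support_fun (S : set 'rV[R]_n) (v : 'rV[R]_n) : R :=
  sup [set \sum_k s ord0 k * v ord0 k | s in S].

Definition norm1 (x : 'rV[R]_n) : R := \sum_k `|x ord0 k|.

Definition beta_of (Uhat U : set 'rV[R]_n) : R :=
  sup [set inf [set norm1 (y - x) | x in U] | y in Uhat].

(* the robust Q-iteration, driven by samples J t i a (used at step t >= 1) *)
Fixpoint robustQ {Omega : Type} (a0 : A) (c : 'I_n -> A -> R) (theta : R)
  (Uhat : A -> 'I_n -> set 'rV[R]_n) (gamma : nat -> R)
  (J : nat -> 'I_n -> A -> Omega -> 'I_n) (Q0 : qfactor) (t : nat) (w : Omega)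
  : qfactor :=
  match t with
  | 0 => Q0
  | t'.+1 => fun i a =>
      (1 - gamma t'.+1) * robustQ a0 c theta Uhat gamma J Q0 t' w i a
      + gamma t'.+1 * (c i a
          + theta * support_fun (Uhat a i) (vvec a0 (robustQ a0 c theta Uhat gamma J Q0 t' w))
          + theta * vmin a0 (robustQ a0 c theta Uhat gamma J Q0 t' w) (J t'.+1 i a w))
  end.

End RobustQ.
Arguments simplex {R n}.

Definition mutually_independent (R : realType) (d : measure_display)
  (Omega : measurableType d) (P : probability Omega R) (I : eqType) (n : nat)
  (X : I -> Omega -> 'I_n) : Prop :=
  forall (s : seq I) (x : I -> 'I_n), uniq s ->
    P (\bigcap_(k in [set k | k \in s]) [set w | X k w = x k]) =
    (\prod_(k <- s) P [set w | X k w = x k])%E.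

From HB Require Import structures.
From mathcomp Require Import all_boot all_order all_algebra.
From mathcomp Require Import all_classical all_reals all_analysis.
From mathcomp Require Import ring lra.
Import Order.TTheory GRing.Theory Num.Theory.
Import numFieldNormedType.Exports.
Local Open Scope classical_set_scope.
Local Open Scope ring_scope.
Set Implicit Arguments. Unset Strict Implicit. Unset Printing Implicit Defensive.

(* The proxy Bellman operator
     T Q (i, a) = c(i, a) + theta * (sigma_{Uhat}(v_Q) + p . v_Q),
   the conditional mean of one step of the iteration, is a sup-norm contraction
   of modulus theta (1 + beta), since every p + y with y in Uhat has l1-norm at
   most 1 + beta.  It differs from the robust Bellman operator by at most
   theta * beta * ||Q||, so its fixed point Q' is eps-close to Q*.  One step of
   the iteration is a step towards T plus the martingale noise
   gamma * sum_k v(k) (1[j = k] - p_k); by Kolmogorov's maximal inequality the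
   series of noise coefficients converge almost surely, and a deterministic
   perturbed-contraction argument then yields Q_t -> Q'. *)

Section SupportFunctions.
Variables (R : realType) (n : nat).
Implicit Types (s v w x y : 'rV[R]_n) (S U Uh : set 'rV[R]_n) (M : R).

Definition dot s v := \sum_k s ord0 k * v ord0 k.

Lemma dotDl s s' v : dot (s + s') v = dot s v + dot s' v.
Proof. by rewrite /dot -big_split; apply: eq_bigr => k _; rewrite mxE mulrDl. Qed.

Lemma dotBl s s' v : dot (s - s') v = dot s v - dot s' v.
Proof. by rewrite /dot -sumrB; apply: eq_bigr => k _; rewrite !mxE mulrBl. Qed.

Lemma dotBr s v w : dot s (v - w) = dot s v - dot s w.
Proof. by rewrite /dot -sumrB; apply: eq_bigr => k _; rewrite !mxE mulrBr. Qed.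

Lemma norm1_ge0 x : 0 <= norm1 x.
Proof. exact: sumr_ge0. Qed.

Lemma norm1D x y : norm1 (x + y) <= norm1 x + norm1 y.
Proof.
by rewrite /norm1 -big_split; apply: ler_sum => k _; rewrite mxE ler_normD.
Qed.

Lemma dot_le_norm1 s v M : (forall k, `|v ord0 k| <= M) -> dot s v <= norm1 s * M.
Proof.
move=> vM; rewrite /norm1 mulr_suml; apply: ler_sum => k _.
by rewrite (le_trans (ler_norm _)) // normrM ler_wpM2l.
Qed.

Lemma simplex_norm1 x : simplex x -> norm1 x = 1.
Proof. by move=> [x0 <-]; apply: eq_bigr => k _; rewrite ger0_norm. Qed.

Lemma simplex_entry x k : simplex x -> 0 <= x ord0 k <= 1.
Proof. by move=> [x0 x1]; rewrite x0 -x1 (bigD1 k) //= lerDl sumr_ge0. Qed.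

Lemma compact_entry_bounded S : compact S ->
  exists M, forall s, S s -> forall k, `|s ord0 k| <= M.
Proof.
move=> /compact_bounded [M0 [_ SM0]]; exists (`|M0| + 1) => s Ss k.
apply: le_trans (SM0 (`|M0| + 1) _ _ Ss); last by rewrite (le_lt_trans (ler_norm _)) ?ltrDl.
rewrite [leRHS]mx_normrE.
exact: (le_bigmax _ (fun ij : 'I_1 * 'I_n => `|s ij.1 ij.2|) (ord0, k)).
Qed.

Lemma support_fun_ge S M v s : (forall s, S s -> forall k, `|s ord0 k| <= M) ->
  S s -> dot s v <= support_fun S v.
Proof.
move=> SM Ss; apply: ub_le_sup; last by exists s.
exists (norm1 v * M) => _ [s' Ss' <-].
rewrite /dot; under eq_bigr do rewrite mulrC.
by apply: dot_le_norm1 => k; exact: SM.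
Qed.

Lemma support_fun_le S v b : S !=set0 -> (forall s, S s -> dot s v <= b) ->
  support_fun S v <= b.
Proof.
move=> [s0 Ss0] Sb; apply: ge_sup; first by exists (dot s0 v), s0.
by move=> _ [s Ss <-]; exact: Sb.
Qed.

Lemma lb_le_beta_of Uh U M y r b : U !=set0 -> U `<=` Uh ->
  (forall s, Uh s -> forall k, `|s ord0 k| <= M) -> Uh y -> 0 <= r ->
  (forall x, U x -> b <= r * norm1 (y - x)) -> b <= r * beta_of Uh U.
Proof.
move=> [x0 Ux0] UUh UhM Uhy r0 yb.
have [r_eq0|rN0] := eqVneq r 0; first by have := yb x0 Ux0; rewrite r_eq0 !mul0r.
have r_gt0 : 0 < r by rewrite lt_neqAle eq_sym rN0.
rewrite -ler_pdivrMl //; apply: (@le_trans _ _ (inf [set norm1 (y - x) | x in U])).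
  apply: lb_le_inf; first by exists (norm1 (y - x0)), x0.
  by move=> _ [x Ux <-]; rewrite ler_pdivrMl //; exact: yb.
apply: ub_le_sup; last by exists y.
exists ((M + M) * n%:R) => _ [y' Uhy' <-].
apply: (@le_trans _ _ (norm1 (y' - x0))).
  by apply: ge_inf; [exists 0 => _ [x _ <-]; exact: norm1_ge0 | exists x0].
rewrite mulr_natr -[in X in _ *+ X](card_ord n) -sumr_const; apply: ler_sum => k _.
by rewrite !mxE (le_trans (ler_normB _ _)) // lerD // UhM //; apply: UUh.
Qed.

End SupportFunctions.

Section QFactors.
Variables (R : realType) (n : nat) (A : finType).
Implicit Types (Q : qfactor R n A).

Definition qdiff Q Q' : qfactor R n A := fun i a => Q i a - Q' i a.

Lemma qnorm_ge0 Q : 0 <= qnorm Q.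
Proof. exact: bigmax_ge_id. Qed.

Lemma qnorm_ge Q i a : `|Q i a| <= qnorm Q.
Proof.
apply: le_trans (le_bigmax _ (fun i => \big[Num.max/0]_a `|Q i a|) i).
exact: (le_bigmax _ (fun a => `|Q i a|) a).
Qed.

Lemma qnorm_le Q b : 0 <= b -> (forall i a, `|Q i a| <= b) -> qnorm Q <= b.
Proof. by move=> b0 Qb; do 2!apply: bigmax_le => // ? _. Qed.

Lemma qnorm_diffC Q Q' : qnorm (qdiff Q Q') = qnorm (qdiff Q' Q).
Proof.
by apply/le_anti/andP; split; apply: qnorm_le => [|i a]; rewrite ?qnorm_ge0 // distrC qnorm_ge.
Qed.

Lemma qnorm_le_diff Q Q' : qnorm Q <= qnorm (qdiff Q Q') + qnorm Q'.
Proof.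
apply: qnorm_le => [|i a]; first by rewrite addr_ge0 ?qnorm_ge0.
rewrite -[Q i a](subrK (Q' i a)) (le_trans (ler_normD _ _)) //.
by apply: lerD; [exact: (qnorm_ge (qdiff Q Q') i a) | exact: qnorm_ge].
Qed.

Variable a0 : A.

Lemma vmin_le Q k a : vmin a0 Q k <= Q k a.
Proof. exact: bigmin_le. Qed.

Lemma vmin_ge Q k b : (forall a, b <= Q k a) -> b <= vmin a0 Q k.
Proof. by move=> h; apply: le_bigmin. Qed.

Lemma vvecE Q k : vvec a0 Q ord0 k = vmin a0 Q k.
Proof. by rewrite mxE. Qed.

Lemma vmin_lipschitz Q Q' k : `|vmin a0 Q k - vmin a0 Q' k| <= qnorm (qdiff Q Q').
Proof.
have half Q1 Q2 : vmin a0 Q2 k - qnorm (qdiff Q1 Q2) <= vmin a0 Q1 k.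
  apply: vmin_ge => a; have := vmin_le Q2 k a.
  by have := qnorm_ge (qdiff Q1 Q2) k a; rewrite ler_norml /qdiff => /andP[]; lra.
have := half Q Q'; have := half Q' Q; rewrite qnorm_diffC ler_norml; lra.
Qed.

Lemma vmin_norm Q k : `|vmin a0 Q k| <= qnorm Q.
Proof.
rewrite ler_norml (le_trans (vmin_le _ _ a0)) ?andbT; last first.
  exact: le_trans (ler_norm _) (qnorm_ge _ _ _).
by apply: vmin_ge => a; have := qnorm_ge Q k a; rewrite ler_norml => /andP[].
Qed.

Definition qlipschitz (rho : R) (T : qfactor R n A -> qfactor R n A) :=
  forall Q Q' i a, `|T Q i a - T Q' i a| <= rho * qnorm (qdiff Q Q').

End QFactors.

(* The library equips matrices with a normed module and a complete uniform
   structure separately; redeclaring completeness makes HB build their join. *)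
HB.instance Definition _ (R : realType) (m n : nat) :=
  Uniform_isComplete.Build 'M[R]_(m, n) cauchy_cvg.

Section ContractionFixedPoint.
Variables (R : realType) (n : nat) (A : finType).
Implicit Types (Q : qfactor R n A) (M : 'M[R]_(n, #|A|)).

Definition qmx Q : 'M[R]_(n, #|A|) := \matrix_(i, j) Q i (enum_val j).
Definition mxq M : qfactor R n A := fun i a => M i (enum_rank a).

Lemma qmxK : cancel qmx mxq.
Proof. by move=> Q; apply/funext => i; apply/funext => a; rewrite /mxq mxE enum_rankK. Qed.

Lemma mxqK : cancel mxq qmx.
Proof. by move=> M; apply/matrixP => i j; rewrite mxE /mxq enum_valK. Qed.

Lemma qmxB Q Q' : qmx (qdiff Q Q') = qmx Q - qmx Q'.
Proof. by apply/matrixP => i j; rewrite !mxE. Qed.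

Lemma mx_norm_qmx Q : `|qmx Q| = qnorm Q.
Proof.
apply/le_anti/andP; split.
  rewrite [leLHS]mx_normrE; apply: bigmax_le => [|[i j] _]; first exact: qnorm_ge0.
  by rewrite mxE qnorm_ge.
apply: qnorm_le => // i a; rewrite [leRHS]mx_normrE.
apply: le_trans (le_bigmax _ (fun ij : 'I_n * 'I_#|A| => `|qmx Q ij.1 ij.2|) (i, enum_rank a)).
by rewrite mxE enum_rankK.
Qed.

Lemma qlipschitz_fixed_point rho T : 0 <= rho < 1 -> qlipschitz rho T ->
  exists Q, T Q = Q.
Proof.
move=> /andP[rho0 rho1] Tlip.
pose f := @mkfun_fun _ _ [set: 'M[R]_(n, #|A|)] setT (qmx \o T \o mxq) (fun _ _ => I).
have [|||M _ fM] := @banach_fixed_point _ _ _ f; [|exact: closedT|by exists 0|].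
  exists (NngNum rho0); split => // -[M M'] _ /=.
  rewrite -qmxB !mx_norm_qmx; apply: qnorm_le => [|i a]; first by rewrite mulr_ge0 ?qnorm_ge0.
  have -> : M - M' = qmx (qdiff (mxq M) (mxq M')) by rewrite qmxB !mxqK.
  by rewrite mx_norm_qmx; exact: Tlip.
by exists (mxq M); rewrite {2}fM /= qmxK.
Qed.

Lemma fixed_point_dist_le rho T Q' Q delta : 0 <= rho < 1 -> qlipschitz rho T ->
  T Q' = Q' -> 0 <= delta -> (forall i a, `|T Q i a - Q i a| <= delta) ->
  qnorm (qdiff Q' Q) <= delta / (1 - rho).
Proof.
move=> /andP[rho0 rho1] Tlip TQ' delta0 Qdelta; rewrite ler_pdivlMr ?subr_gt0 //.
set D := qnorm _; suff : D <= rho * D + delta by lra.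
apply: qnorm_le => [|i a]; first by rewrite addr_ge0 ?mulr_ge0 ?qnorm_ge0.
have -> : qdiff Q' Q i a = (T Q' i a - T Q i a) + (T Q i a - Q i a).
  by rewrite TQ' /qdiff; ring.
by rewrite (le_trans (ler_normD _ _)) // lerD // Tlip.
Qed.

End ContractionFixedPoint.

Section ProxyBellman.
Variables (R : realType) (n : nat) (A : finType) (a0 : A).
Variables (c : 'I_n -> A -> R) (theta : R) (p : A -> 'I_n -> 'rV[R]_n).
Variables (U Uhat : A -> 'I_n -> set 'rV[R]_n).
Implicit Types (Q : qfactor R n A) (v w y : 'rV[R]_n).

Hypothesis theta_ge0 : 0 <= theta.
Hypothesis U_neq0 : forall a i, U a i !=set0.
Hypothesis U_sub_Uhat : forall a i, U a i `<=` Uhat a i.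
Hypothesis pU_simplex : forall a i, [set p a i + x | x in U a i] `<=` simplex.
Hypothesis Uhat_bounded : forall a i,
  exists M, forall s, Uhat a i s -> forall k, `|s ord0 k| <= M.

Definition robust_bellman Q : qfactor R n A := fun i a =>
  c i a + theta * support_fun [set p a i + x | x in U a i] (vvec a0 Q).

Definition proxy_bellman Q : qfactor R n A := fun i a =>
  c i a + theta * (support_fun (Uhat a i) (vvec a0 Q) + dot (p a i) (vvec a0 Q)).

Definition beta_max : R :=
  \big[Num.max/0]_(i : 'I_n) \big[Num.max/0]_(a : A) beta_of (Uhat a i) (U a i).

Lemma beta_max_ge0 : 0 <= beta_max.
Proof. exact: bigmax_ge_id. Qed.

Lemma beta_of_le_max a i : beta_of (Uhat a i) (U a i) <= beta_max.
Proof.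
apply: le_trans (le_bigmax _ (fun i => \big[Num.max/0]_a beta_of (Uhat a i) (U a i)) i).
exact: (le_bigmax _ (fun a => beta_of (Uhat a i) (U a i)) a).
Qed.

Lemma simplex_pU a i x : U a i x -> simplex (p a i + x).
Proof. by move=> Ux; apply: (@pU_simplex a i (p a i + x)); exists x. Qed.

Lemma norm1_p_Uhat a i y : Uhat a i y -> norm1 (p a i + y) <= 1 + beta_max.
Proof.
move=> Uhy; have [M UhM] := Uhat_bounded a i.
rewrite -lerBlDl (le_trans _ (beta_of_le_max a i)) // -[leRHS]mul1r.
apply: (lb_le_beta_of (U_neq0 a i) (@U_sub_Uhat a i) UhM Uhy) => // x Ux.
have px1 : norm1 (p a i + x) = 1 by apply/simplex_norm1/simplex_pU.
have -> : p a i + y = (p a i + x) + (y - x) by rewrite addrACA subrr addr0.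
by have := norm1D (p a i + x) (y - x); rewrite px1 mul1r; lra.
Qed.

Lemma proxy_support_lipschitz a i v w D : 0 <= D ->
  (forall k, `|v ord0 k - w ord0 k| <= D) ->
  support_fun (Uhat a i) v + dot (p a i) v <=
  support_fun (Uhat a i) w + dot (p a i) w + (1 + beta_max) * D.
Proof.
move=> D0 vwD; have [M UhM] := Uhat_bounded a i; have [x0 Ux0] := U_neq0 a i.
rewrite -lerBrDr; apply: support_fun_le => [|y Uhy]; first by exists x0; exact: U_sub_Uhat.
have yw := support_fun_ge w UhM Uhy.
have pyD : dot (p a i + y) (v - w) <= (1 + beta_max) * D.
  have vwD' k : `|(v - w) ord0 k| <= D by rewrite !mxE.
  rewrite (le_trans (dot_le_norm1 _ vwD')) // ler_wpM2r //; exact: norm1_p_Uhat.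
move: pyD; rewrite dotBr !dotDl; lra.
Qed.

Lemma proxy_bellman_lipschitz : qlipschitz (theta * (1 + beta_max)) proxy_bellman.
Proof.
move=> Q Q' i a; have D0 := qnorm_ge0 (qdiff Q Q').
have vD Q1 Q2 k : `|vvec a0 Q1 ord0 k - vvec a0 Q2 ord0 k| <= qnorm (qdiff Q1 Q2).
  by rewrite !vvecE vmin_lipschitz.
have := proxy_support_lipschitz a i D0 (vD Q Q').
have := proxy_support_lipschitz a i (qnorm_ge0 _) (vD Q' Q); rewrite qnorm_diffC.
rewrite /proxy_bellman opprD addrACA subrr add0r -mulrBr normrM ger0_norm // -mulrA.
move=> h1 h2.
by rewrite ler_wpM2l // ler_norml; apply/andP; split; lra.
Qed.

Lemma robust_support_le_proxy a i v :
  support_fun [set p a i + x | x in U a i] v <=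
  support_fun (Uhat a i) v + dot (p a i) v.
Proof.
have [M UhM] := Uhat_bounded a i; have [x0 Ux0] := U_neq0 a i.
apply: support_fun_le => [|_ [x Ux <-]]; first by exists (p a i + x0), x0.
by rewrite dotDl addrC lerD2r (support_fun_ge _ UhM) //; exact: U_sub_Uhat.
Qed.

Lemma proxy_support_le_robust a i v D : 0 <= D -> (forall k, `|v ord0 k| <= D) ->
  support_fun (Uhat a i) v + dot (p a i) v <=
  support_fun [set p a i + x | x in U a i] v + beta_max * D.
Proof.
move=> D0 vD; have [M UhM] := Uhat_bounded a i; have [x0 Ux0] := U_neq0 a i.
have pU1 s : [set p a i + x | x in U a i] s -> forall k, `|s ord0 k| <= 1.
  move=> [x Ux <-] k; have /andP[s0 s1] := simplex_entry k (simplex_pU Ux).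
  by rewrite ger0_norm.
rewrite -lerBrDr; apply: support_fun_le => [|y Uhy]; first by exists x0; exact: U_sub_Uhat.
rewrite lerBrDr -lerBlDl addrAC (le_trans _ (ler_wpM2r D0 (beta_of_le_max a i))) //.
rewrite mulrC; apply: (lb_le_beta_of (U_neq0 a i) (@U_sub_Uhat a i) UhM Uhy) => // x Ux.
have := support_fun_ge v pU1 (ex_intro2 _ _ x Ux erefl).
have := dot_le_norm1 (y - x) vD; rewrite dotBl dotDl mulrC; lra.
Qed.

Lemma proxy_robust_bellman_gap Q i a :
  `|proxy_bellman Q i a - robust_bellman Q i a| <= theta * beta_max * qnorm Q.
Proof.
have vQ k : `|vvec a0 Q ord0 k| <= qnorm Q by rewrite vvecE vmin_norm.
have := proxy_support_le_robust a i (qnorm_ge0 Q) vQ.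
have := robust_support_le_proxy a i (vvec a0 Q).
rewrite /proxy_bellman /robust_bellman opprD addrACA subrr add0r -mulrBr.
rewrite normrM ger0_norm // -mulrA.
move=> h1 h2; rewrite ler_wpM2l // ger0_norm ?subr_ge0 //; lra.
Qed.

End ProxyBellman.

Section ContractionRecursion.
Variable R : realType.
Implicit Types (d e g q kap lam x : nat -> R).

Lemma decay_mul_sum_le d x N :
  (forall t, 0 <= d t) -> (forall t, (N <= t)%N -> 0 <= x t <= 1) ->
  (forall t, (N <= t)%N -> d t.+1 <= (1 - x t) * d t) ->
  forall m, d (N + m)%N * (1 + \sum_(i < m) x (N + i)%N) <= d N.
Proof.
move=> d0 x01 dx; elim=> [|m IHm]; first by rewrite addn0 big_ord0 addr0 mulr1.
rewrite big_ord_recr /= addnS; apply: le_trans IHm.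
have G0 : 0 <= \sum_(i < m) x (N + i)%N.
  by apply: sumr_ge0 => i _; case/andP: (x01 _ (leq_addr i N)).
move: (x01 _ (leq_addr m N)) (dx _ (leq_addr m N)) (d0 (N + m)%N) (d0 (N + m).+1) G0.
move: (x _) (d _) (d _) (\sum_(i < m) _) => y u u' G /andP[y0 y1] du u0 u'0 G0.
have : u' * (1 + (G + y)) <= (1 - y) * u * (1 + (G + y)) by apply: ler_wpM2r => //; lra.
suff : (1 - y) * (1 + (G + y)) <= 1 + G by nra.
have : 0 <= y * (G + y) by rewrite mulr_ge0 ?addr_ge0.
nra.
Qed.

Lemma series_addn_sub g N L :
  series g (N + L)%N - series g N = \sum_(i < L) g (N + i)%N.
Proof.
rewrite sub_series_geq ?leq_addr // -{1}(add0n N) big_addn addKn big_mkord.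
by apply: eq_bigr => i _; rewrite addnC.
Qed.

Lemma series_shiftS g t : series (fun k => g k.+1) t = series g t.+1 - g 0%N.
Proof. by rewrite /series /= big_nat_recl //= addrAC subrr add0r. Qed.

Lemma series_shiftS_cvgy g : series g @ \oo --> +oo ->
  series (fun k => g k.+1) @ \oo --> +oo.
Proof.
move/cvgryPge => gy; apply/cvgryPge => M; have [N _ HN] := gy (M + g 0%N).
by exists N => // t /= Nt; rewrite series_shiftS lerBrDr; exact: HN (leqW Nt).
Qed.

Lemma is_cvg_series_shiftS g : cvgn (series g) -> cvgn (series (fun k => g k.+1)).
Proof.
move=> /cvg_ex[l gl]; apply/cvg_ex; exists (l - g 0%N).
rewrite (_ : series _ = (fun t => series g t.+1) - cst (g 0%N)).
  by apply: cvgB; [rewrite cvg_shiftS | exact: cvg_cst].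
by apply/funext => t; rewrite series_shiftS.
Qed.

Lemma sqr_summable_le1 g : (forall t, 0 <= g t) ->
  cvgn (series (fun t => g t ^+ 2)) -> \forall t \near \oo, g t.+1 <= 1.
Proof.
move=> g0 /cvg_series_cvg_0 /cvgr0Pnorm_le /(_ 1 ltr01) [N _ HN].
exists N => // t /= /leqW /HN /=; rewrite ger0_norm ?sqr_ge0 // => g2.
by have := g0 t.+1; nra.
Qed.

Lemma series_tail_le g N L : (forall t, 0 <= g t) -> cvgn (series g) ->
  \sum_(i < L) g (N + i)%N <= limn (series g) - series g N.
Proof.
move=> g0 cg; rewrite -series_addn_sub lerB // nondecreasing_cvgn_le //.
by apply/nondecreasing_seqP => t; rewrite /series /= big_nat_recr //= lerDl.
Qed.

Lemma contraction_recursion_cvg0 e g lam (mu : R) :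
  0 < mu <= 1 -> (forall t, 0 <= e t) ->
  (\forall t \near \oo, 0 <= g t <= 1) ->
  (\forall t \near \oo, e t.+1 <= (1 - mu * g t) * e t + g t * lam t) ->
  lam @ \oo --> 0 -> series g @ \oo --> +oo -> e @ \oo --> 0.
Proof.
move=> /andP[mu0 mu1] e0 g01 erec /cvgr0Pnorm_le lam0 gdiv.
apply/cvgr0Pnorm_le => eps eps0; have eps20 : 0 < eps / 2 by rewrite divr_gt0.
have [N _ HN] : \forall t \near \oo, [/\ 0 <= g t <= 1,
    e t.+1 <= (1 - mu * g t) * e t + g t * lam t & `|lam t| <= mu * (eps / 2)].
  near=> t; split; near: t; [exact: g01 | exact: erec | exact: lam0 (mulr_gt0 mu0 eps20)].
(* once [lam] is small, the excess of [e] over eps/2 is contracted at every step *)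
pose d t := Num.max (e t - eps / 2) 0.
have d0 t : 0 <= d t by rewrite le_max lexx orbT.
have ed t : e t - eps / 2 <= d t by rewrite le_max lexx.
have mug01 t : (N <= t)%N -> 0 <= mu * g t <= 1.
  case/HN => /andP[g0 g1] _ _.
  by rewrite (mulr_ge0 (ltW mu0) g0) (mulr_ile1 (ltW mu0) g0 mu1 g1).
have drec t : (N <= t)%N -> d t.+1 <= (1 - mu * g t) * d t.
  move=> Nt; have /andP[x0 x1] := mug01 t Nt; case/HN: Nt => /andP[g0 _] et lt.
  rewrite ge_max mulr_ge0 ?subr_ge0 ?andbT // (le_trans _ (ler_wpM2l _ (ed t))) ?subr_ge0 //.
  have := ler_wpM2l g0 (le_trans (ler_norm _) lt); nra.
pose K := d N / (mu * (eps / 2)).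
have [M _ HM] := (cvgryPge _).1 gdiv (series g N + K).
exists (maxn N M) => // t /=; rewrite geq_max => /andP[Nt /HM /= gt].
have := decay_mul_sum_le d0 mug01 drec (t - N).
rewrite -mulr_sumr -series_addn_sub subnKC // => dt.
have dNK : d N = mu * K * (eps / 2).
  by rewrite /K; field; rewrite !gt_eqF.
have muK0 : 0 <= mu * K.
  by apply: mulr_ge0; [exact: ltW | apply/divr_ge0/ltW/mulr_gt0].
have dK : d t * (1 + mu * K) <= mu * K * (eps / 2).
  rewrite -dNK (le_trans _ dt) // ler_wpM2l // lerD2l.
  by apply: ler_wpM2l; [exact: ltW | rewrite lerBrDr addrC].
have : d t <= eps / 2.
  by move: dK (d0 t) muK0; move: (d t) (mu * K) => x k; nra.
by rewrite ger0_norm // => /(le_trans (ed t)); lra.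
Unshelve. all: by end_near. Qed.

Lemma perturbed_contraction_cvg0 e q kap g (rho C : R) :
  0 <= rho < 1 -> 0 <= C ->
  (forall t, 0 <= e t) -> (forall t, 0 <= q t) -> (forall t, 0 <= kap t) ->
  (\forall t \near \oo, 0 <= g t <= 1) ->
  (forall t, q t <= e t + kap t * (q t + C)) ->
  (\forall t \near \oo,
     e t.+1 <= (1 - g t) * e t + g t * (rho * q t + kap t * (q t + C))) ->
  kap @ \oo --> 0 -> series g @ \oo --> +oo -> q @ \oo --> 0.
Proof.
move=> /andP[rho0 rho1] C0 e0 q0 kap0 g01 qe erec kap_cvg0 gdiv.
have kap_small : \forall t \near \oo, kap t <= (1 - rho) / 8.
  move/cvgr0Pnorm_le : kap_cvg0 => /(_ ((1 - rho) / 8)) kap_small.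
  by apply: filterS (kap_small _) => [t|]; rewrite ?ger0_norm //; lra.
have q_le t : kap t <= (1 - rho) / 8 ->
    q t <= (1 + 2 * kap t) * e t + 2 * kap t * C.
  move=> kt; have := qe t; have := kap0 t; have := q0 t; have := e0 t.
  move: (q t) (e t) (kap t) kt => x y k kt y0 x0 k0 xy.
  have : 0 <= k * (1 - 2 * k) * (x + C) by apply: mulr_ge0; [apply: mulr_ge0|]; lra.
  nra.
have e_cvg0 : e @ \oo --> 0.
  apply: (@contraction_recursion_cvg0 e g (fun t => 4 * C * kap t) ((1 - rho) / 2)).
  - by apply/andP; split; lra.
  - exact: e0.
  - exact: g01.
  - near=> t; have /andP[g0 g1] : 0 <= g t <= 1 by near: t.
    have kt : kap t <= (1 - rho) / 8 by near: t.
    have := q_le t kt; have := kap0 t; have := e0 t; have := q0 t.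
    have : e t.+1 <= (1 - g t) * e t + g t * (rho * q t + kap t * (q t + C)) by near: t.
    move: (e t.+1) (e t) (q t) (kap t) (g t) g0 g1 kt => y x z k h g0 g1 kt.
    move=> rec z0 x0 k0 zx.
    have : rho * z + k * (z + C) <= (1 - (1 - rho) / 2) * x + 4 * C * k.
      have : (rho + k) * z <= (rho + k) * ((1 + 2 * k) * x + 2 * k * C).
        by rewrite ler_wpM2l ?addr_ge0.
      have : 0 <= k * (3 - 2 * rho - 2 * k) * (x + C).
        by apply: mulr_ge0; [apply: mulr_ge0|]; lra.
      nra.
    move/(ler_wpM2l g0); nra.
  - by rewrite -(mulr0 (4 * C)); apply: cvgMl_tmp.
  - exact: gdiv.
apply: (@squeeze_cvgr _ _ _ _ (cst 0) (fun t => 2 * e t + 2 * C * kap t)).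
- near=> t; rewrite q0 /=; have kt : kap t <= (1 - rho) / 8 by near: t.
  have := q_le t kt; have := kap0 t; have := e0 t; nra.
- exact: cvg_cst.
- have e2 : (fun t => 2 * e t) @ \oo --> (2 * 0 : R) by apply: cvgMl_tmp.
  have k2 : (fun t => 2 * C * kap t) @ \oo --> (2 * C * 0 : R) by apply: cvgMl_tmp.
  by have := cvgD e2 k2; rewrite !mulr0 addr0; apply.
Unshelve. all: by end_near. Qed.

End ContractionRecursion.

Lemma bigsetU_ordP T n (F : 'I_n -> set T) w :
  (\big[setU/set0]_(x < n) F x) w <-> exists x, F x w.
Proof.
rewrite -bigcup_seq; split => [[x _ Fx]|[x Fx]]; first by exists x.
by exists x => //=; rewrite mem_index_enum.
Qed.

Lemma bigsetI_seqP T (I : choiceType) (s : seq I) (F : I -> set T) w :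
  (\big[setI/setT]_(x <- s) F x) w <-> (forall x, x \in s -> F x w).
Proof. by rewrite -bigcap_seq; split => h x /h. Qed.

Lemma setI_bigsetU_ord T n (F : 'I_n -> set T) (B : set T) :
  B `&` \big[setU/set0]_(x < n) F x = \big[setU/set0]_(x < n) (B `&` F x).
Proof.
apply/seteqP; split => w.
  by case=> Bw /bigsetU_ordP [x Fx]; apply/bigsetU_ordP; exists x.
by case/bigsetU_ordP => x [Bw Fx]; split => //; apply/bigsetU_ordP; exists x.
Qed.

Section KolmogorovInequality.
Variables (R : realType) (d : measure_display) (Omega : measurableType d).
Variables (P : probability Omega R) (n : nat) (X : nat -> Omega -> 'I_n).
Variables (q : 'I_n -> R) (f : nat -> 'I_n -> R).

Hypothesis X_measurable : forall t x, measurable [set w | X t w = x].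
Hypothesis X_iid : forall (us : seq nat) (y : nat -> 'I_n), uniq us ->
  P (\big[setI/setT]_(u <- us) [set w | X u w = y u]) = (\prod_(u <- us) q (y u))%:E.
Hypothesis q_ge0 : forall x, 0 <= q x.
Hypothesis q_sum1 : \sum_x q x = 1.
Hypothesis f_centered : forall t, \sum_x q x * f t x = 0.

Definition step_variance t := \sum_x q x * f t x ^+ 2.

(* [exit_event eps L t s]: the partial sums, started from [s] just before
   sample [t], leave the open [eps]-ball within [L] more samples.  [exit_prob]
   computes its probability along the tree of sample values. *)
Fixpoint exit_event (eps : R) (L t : nat) (s : R) : set Omega :=
  if eps <= `|s| then setT else
  if L is L'.+1 then \big[setU/set0]_(x < n)
      ([set w | X t w = x] `&` exit_event eps L' t.+1 (s + f t x))
  else set0.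

Fixpoint exit_prob (eps : R) (L t : nat) (s : R) : R :=
  if eps <= `|s| then 1 else
  if L is L'.+1 then \sum_(x < n) q x * exit_prob eps L' t.+1 (s + f t x)
  else 0.

Lemma exit_event_measurable eps L t s : measurable (exit_event eps L t s).
Proof.
elim: L t s => [|L IHL] t s /=; case: ifP => // _.
by apply: bigsetU_measurable => x _; apply: measurableI.
Qed.

Lemma exit_prob_kolmogorov eps L t s : 0 < eps ->
  eps ^+ 2 * exit_prob eps L t s <= s ^+ 2 + \sum_(r < L) step_variance (t + r)%N.
Proof.
move=> eps0; have var0 t' : 0 <= step_variance t'.
  by apply: sumr_ge0 => x _; rewrite mulr_ge0 ?sqr_ge0.
have sum_var0 L' t' : 0 <= \sum_(r < L') step_variance (t' + r)%N by exact: sumr_ge0.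
have exit_sq s' : eps <= `|s'| -> eps ^+ 2 <= s' ^+ 2.
  by move=> h; rewrite -real_normK ?num_real // lerXn2r // ?nnegrE ltW.
elim: L t s => [|L IHL] t s /=; case: ifP => exit.
- by rewrite mulr1 big_ord0 addr0; exact: exit_sq.
- by rewrite mulr0 big_ord0 addr0 sqr_ge0.
- by rewrite mulr1 (le_trans (exit_sq _ exit)) // lerDl sum_var0.
rewrite big_ord_recl addn0 (eq_bigr (fun r : 'I_L => step_variance (t.+1 + r)%N)); last first.
  by move=> r _; rewrite addSnnS.
set V := \sum_(i < L) _.
apply: (@le_trans _ _ (\sum_x q x * ((s + f t x) ^+ 2 + V))).
  rewrite mulr_sumr; apply: ler_sum => x _.
  by rewrite mulrCA ler_wpM2l // IHL.
rewrite (eq_bigr (fun x => (s ^+ 2 + V) * q x + 2 * s * (q x * f t x)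
  + q x * f t x ^+ 2)); last by move=> x _; ring.
rewrite !big_split /= -!mulr_sumr q_sum1 f_centered mulr0 addr0 mulr1.
by rewrite -addrA [V + _]addrC.
Qed.

Definition atom (us : seq nat) (y : nat -> 'I_n) : set Omega :=
  \big[setI/setT]_(u <- us) [set w | X u w = y u].

Lemma measure_atom_exit_event eps L t s us y :
  uniq us -> (forall u, u \in us -> (u < t)%N) ->
  P (atom us y `&` exit_event eps L t s) = (\prod_(u <- us) q (y u) * exit_prob eps L t s)%:E.
Proof.
elim: L t s us y => [|L IHL] t s us y us_uniq us_t /=; case: ifP => exit.
- by rewrite setIT mulr1 X_iid.
- by rewrite setI0 measure0 mulr0.
- by rewrite setIT mulr1 X_iid.
pose y' x u := if u == t then x else y u.
have y'E x u : u \in us -> y' x u = y u by move/us_t; rewrite /y' ltn_neqAle => /andP[/negPf ->].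
have atom_y' x : atom us (y' x) = atom us y.
  by apply: eq_big_seq => u /(y'E x) ->.
have t_us : t \notin us by apply/negP => /us_t; rewrite ltnn.
have atomE x : atom us y `&` ([set w | X t w = x] `&` exit_event eps L t.+1 (s + f t x)) =
    atom (t :: us) (y' x) `&` exit_event eps L t.+1 (s + f t x).
  rewrite [in RHS]/atom big_cons {1}/y' eqxx -/(atom us (y' x)) atom_y'.
  by rewrite setIA [atom us y `&` _]setIC.
rewrite setI_bigsetU_ord (eq_bigr _ (fun x _ => atomE x)) measure_bigsetU_ord; first last.
- move=> x1 x2 _ _ [w [[/bigsetI_seqP /(_ t (mem_head _ _)) + _]
    [/bigsetI_seqP /(_ t (mem_head _ _)) + _]]].
  by rewrite /y' eqxx => <- ->.
- by move=> x; apply: measurableI; [exact: bigsetI_measurable | exact: exit_event_measurable].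
rewrite (eq_bigr (fun x => (q x * \prod_(u <- us) q (y u) * exit_prob eps L t.+1 (s + f t x))%:E)).
  by rewrite sumEFin mulr_sumr; congr (_%:E); apply: eq_bigr => x _; ring.
move=> x _; have us_t' u : u \in t :: us -> (u < t.+1)%N.
  by rewrite in_cons => /orP[/eqP ->//|/us_t/ltnW].
apply: eq_trans (IHL t.+1 (s + f t x) (t :: us) (y' x) _ us_t') _; first by rewrite /= t_us.
rewrite big_cons {1}/y' eqxx; congr ((_ * _ * _)%:E).
by apply: eq_big_seq => u /(y'E x) ->.
Qed.

Lemma measure_exit_event eps L t s : P (exit_event eps L t s) = (exit_prob eps L t s)%:E.
Proof.
(* any point of Omega supplies the unused values of the empty atom *)
have [w0 _] : [set: Omega] !=set0.
  apply/set0P/eqP => Omega0; have := probability_setT P.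
  by rewrite Omega0 measure0 => /esym/eqP; rewrite onee_eq0.
have := @measure_atom_exit_event eps L t s [::] (fun=> X 0 w0) erefl.
by rewrite /atom !big_nil setTI mul1r; apply.
Qed.

Lemma exit_event_le_succ eps L t s : exit_event eps L t s `<=` exit_event eps L.+1 t s.
Proof.
elim: L t s => [|L IHL] t s /=; case: ifP => // _ w; first by case.
move/bigsetU_ordP => [x [Xx Lw]].
by apply/bigsetU_ordP; exists x; split => //; exact: IHL.
Qed.

Lemma exit_event_partial_sum eps L t s w j : (j <= L)%N ->
  eps <= `|s + \sum_(r < j) f (t + r)%N (X (t + r)%N w)| -> exit_event eps L t s w.
Proof.
elim: L t s j => [|L IHL] t s [|j] //= jL; case: ifP => // exit;
  rewrite ?big_ord0 ?addr0 ?exit //.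
rewrite big_ord_recl addn0 addrA (eq_bigr (fun r : 'I_j => f (t.+1 + r)%N (X (t.+1 + r)%N w))).
  by move=> exit_j; apply/bigsetU_ordP; exists (X t w); split => //; exact: IHL exit_j.
by move=> r _; rewrite addSnnS.
Qed.

Hypothesis variance_summable : cvgn (series step_variance).

Lemma exit_events_null eps : 0 < eps ->
  P (\bigcap_m \bigcup_L exit_event eps L m 0) = 0%E.
Proof.
move=> eps0; have eps2 : 0 < eps ^+ 2 by rewrite exprn_gt0.
have var0 t : 0 <= step_variance t by apply: sumr_ge0 => x _; rewrite mulr_ge0 ?sqr_ge0.
apply/eqP; rewrite eq_le measure_ge0 andbT; apply/lee_addgt0Pr => delta delta0.
have [M _ HM] : \forall M \near \oo,
    limn (series step_variance) - series step_variance M <= delta * eps ^+ 2.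
  move/cvg_ex : variance_summable => [l sl]; rewrite (cvg_lim _ sl) //.
  move/cvgrPdist_le : sl => /(_ _ (mulr_gt0 delta0 eps2)).
  by apply: filterS => m; rewrite ler_norml => /andP[].
pose E L := exit_event eps L M 0.
have mE : measurable (\bigcup_L E L).
  by apply: bigcupT_measurable => L; exact: exit_event_measurable.
apply: (@le_trans _ _ (P (\bigcup_L E L))).
  apply: le_measure; rewrite ?inE //; last by move=> w /(_ M I).
  apply: bigcapT_measurable => m; apply: bigcupT_measurable => L.
  exact: exit_event_measurable.
have E_mono : {homo E : L L' / (L <= L')%N >-> (L <= L')%O}.
  apply: (@homo_leq _ E (fun A B : set Omega => (A <= B)%O)) => [A|B A C|L].
  - exact: lexx.
  - exact: le_trans.
  - by rewrite subsetEset; exact: exit_event_le_succ.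
have PE := @nondecreasing_cvg_mu _ _ _ P E (fun L => exit_event_measurable eps L M 0) mE E_mono.
rewrite add0e -(cvg_lim (@ereal_hausdorff R) PE).
apply: lime_le; first by apply/cvg_ex; exists (P (\bigcup_L E L)).
apply: nearW => L; rewrite /= measure_exit_event lee_fin -(ler_pM2l eps2) [leRHS]mulrC.
have := exit_prob_kolmogorov L M 0 eps0; rewrite expr0n add0r => /le_trans; apply.
exact: le_trans (series_tail_le M L var0 variance_summable) (HM M (leqnn M)).
Qed.

Lemma partial_sums_cvg_ae :
  {ae P, forall w, cvgn (series (fun r => f r (X r w)))}.
Proof.
pose bad j := \bigcap_m \bigcup_L exit_event j.+1%:R^-1 L m 0.
have bad_null : P.-negligible (\bigcup_j bad j).
  apply: negligible_bigcup => j; apply/negligibleP; last exact: exit_events_null.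
  apply: bigcapT_measurable => m; apply: bigcupT_measurable => L.
  exact: exit_event_measurable.
apply: negligibleS bad_null => w /= ncvg; apply: contra_notP ncvg => good.
rewrite (_ : series _ = fun m => \sum_(r < m) f r (X r w)); last first.
  by apply/funext => m; rewrite /series /= big_mkord.
apply/cauchy_cvgP/cauchy_exP => e e0.
have [j _ /(_ j (leqnn j)) /= je] := near_infty_natSinv_lt (PosNum e0).
have [m not_exit] : exists m, ~ (\bigcup_L exit_event j.+1%:R^-1 L m 0) w.
  by apply/existsNP => exit_all; apply: good; exists j.
exists (\sum_(r < m) f r (X r w)); exists m => // t /= mt.
rewrite -ball_normE /ball_ /= -(subnKC mt) big_split_ord /= opprD addNKr normrN.
rewrite (lt_le_trans _ (ltW je)) // ltNge; apply/negP => exit.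
apply: not_exit; exists (t - m)%N => //.
by apply: (exit_event_partial_sum (leqnn _)); rewrite add0r.
Qed.

End KolmogorovInequality.

Section StochasticApproximation.
Variables (R : realType) (n : nat) (A : finType) (a0 : A).
Variables (T : qfactor R n A -> qfactor R n A) (rho theta : R) (g : nat -> R).
Variables (eta : nat -> 'I_n -> A -> 'I_n -> R) (Q : nat -> qfactor R n A).
Variable Qf : qfactor R n A.

Hypothesis rho01 : 0 <= rho < 1.
Hypothesis theta_ge0 : 0 <= theta.
Hypothesis T_lipschitz : qlipschitz rho T.
Hypothesis T_Qf : T Qf = Qf.
Hypothesis eta_le1 : forall t i a k, `|eta t i a k| <= 1.
Hypothesis g_ge0 : forall t, 0 <= g t.
Hypothesis g_le1 : \forall t \near \oo, g t <= 1.
Hypothesis g_diverges : series g @ \oo --> +oo.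
Hypothesis noise_cvg : forall i a k, cvgn (series (fun t => g t * eta t i a k)).
Hypothesis Q_rec : forall t i a, Q t.+1 i a = (1 - g t) * Q t i a +
  g t * (T (Q t) i a + theta * \sum_k vmin a0 (Q t) k * eta t i a k).

Let noise i a k := series (fun t => g t * eta t i a k).
Let residual t i a k := noise i a k t - limn (noise i a k).
Let residual_sum t := \sum_i \sum_a \sum_k `|residual t i a k|.

Lemma residual_step t i a k : residual t.+1 i a k - residual t i a k = g t * eta t i a k.
Proof. by rewrite /residual /noise seriesSr; ring. Qed.

Lemma residual_sum_ge0 t : 0 <= residual_sum t.
Proof. by do 3!(apply: sumr_ge0 => ? _). Qed.

Lemma residual_sum_ge t i a : \sum_k `|residual t i a k| <= residual_sum t.
Proof.
have sum_ge (I : finType) (F : I -> R) j : (forall x, 0 <= F x) -> F j <= \sum_x F x.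
  by move=> F0; rewrite (bigD1 j) //= lerDl sumr_ge0.
apply: le_trans (sum_ge _ (fun i => \sum_a \sum_k `|residual t i a k|) i _) => [|i'].
  by apply: sum_ge => a'; exact: sumr_ge0.
by do 2!(apply: sumr_ge0 => ? _).
Qed.

Lemma residual_sum_cvg0 : residual_sum @ \oo --> 0.
Proof.
have residual_cvg0 i a k : (fun t => residual t i a k) @ \oo --> 0.
  case/cvg_ex: (@noise_cvg i a k) => l Sl; rewrite -(subrr l) /residual (cvg_lim _ Sl) //.
  exact: cvgB Sl (cvg_cst l).
rewrite (_ : 0 = \sum_(i < n) \sum_(a : A) \sum_(k < n) `|0 : R|); last first.
  by rewrite !big1 // => *; rewrite ?big1 ?normr0.
apply: (cvg_big add_continuous) => // i _; apply: (cvg_big add_continuous) => // a _.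
by apply: (cvg_big add_continuous) => // k _; exact: cvg_norm (residual_cvg0 i a k).
Qed.

Let v t k := vmin a0 (Q t) k.
Let B := qnorm Qf.
Let dist t := qnorm (qdiff (Q t) Qf).
Let K := 2 + theta * n%:R.
Let kappa t := theta * (residual_sum t + K * residual_sum t.+1).

Lemma K_ge0 : 0 <= K.
Proof. by rewrite addr_ge0 ?mulr_ge0. Qed.

Lemma kappa_ge0 t : 0 <= kappa t.
Proof. by rewrite mulr_ge0 // addr_ge0 ?mulr_ge0 ?residual_sum_ge0 ?K_ge0. Qed.

Lemma kappa_cvg0 : kappa @ \oo --> 0.
Proof.
have RS1 : (fun t => residual_sum t.+1) @ \oo --> 0 by rewrite cvg_shiftS; exact: residual_sum_cvg0.
have := cvgMl_tmp (a := theta) (cvgD residual_sum_cvg0 (cvgMl_tmp (a := K) RS1)).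
by rewrite mulr0 addr0 mulr0; apply.
Qed.

Lemma v_norm_le t k : `|v t k| <= dist t + B.
Proof. exact: le_trans (vmin_norm _ _ _) (qnorm_le_diff _ _). Qed.

Lemma Q_norm_le t i a : `|Q t i a| <= dist t + B.
Proof. exact: le_trans (qnorm_ge _ _ _) (qnorm_le_diff _ _). Qed.

Lemma noise_term_le t i a :
  `|\sum_k v t k * residual t i a k| <= (dist t + B) * residual_sum t.
Proof.
apply: le_trans (ler_norm_sum _ _ _) _.
apply: le_trans (ler_wpM2l _ (residual_sum_ge t i a)); last by rewrite addr_ge0 ?qnorm_ge0.
by rewrite mulr_sumr ler_sum // => k _; rewrite normrM ler_wpM2r ?v_norm_le.
Qed.

(* Subtracting the weighted tails of the converging noise series leaves a
   noise-free contraction step, up to errors of size [kappa]. *)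
Let Y t i a := Q t i a - theta * \sum_k v t k * residual t i a k.
Let errY t := qnorm (qdiff (Y t) Qf).

Lemma dist_le_errY t : dist t <= errY t + kappa t * (dist t + B).
Proof.
have dB0 : 0 <= dist t + B := addr_ge0 (qnorm_ge0 _) (qnorm_ge0 _).
apply: qnorm_le => [|i a]; first exact: addr_ge0 (qnorm_ge0 _) (mulr_ge0 (kappa_ge0 t) dB0).
have -> : qdiff (Q t) Qf i a = qdiff (Y t) Qf i a + theta * \sum_k v t k * residual t i a k.
  by rewrite /qdiff /Y; ring.
rewrite (le_trans (ler_normD _ _)) // lerD ?qnorm_ge // normrM ger0_norm //.
rewrite (le_trans (ler_wpM2l theta_ge0 (noise_term_le t i a))) // mulrCA mulrC ler_wpM2r //.
by rewrite ler_wpM2l // lerDl mulr_ge0 ?K_ge0 ?residual_sum_ge0.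
Qed.

Lemma T_norm_le t i a : `|T (Q t) i a| <= dist t + B.
Proof.
have := T_lipschitz (Q t) Qf i a; rewrite T_Qf => TQ.
rewrite -(subrK (Qf i a) (T (Q t) i a)) (le_trans (ler_normD _ _)) // lerD ?qnorm_ge //.
by rewrite (le_trans TQ) // ler_piMl ?qnorm_ge0 // ltW; case/andP: rho01.
Qed.

Lemma Q_step_le t i a : `|Q t.+1 i a - Q t i a| <= g t * (K * (dist t + B)).
Proof.
have -> : Q t.+1 i a - Q t i a = g t * (T (Q t) i a - Q t i a +
    theta * \sum_k vmin a0 (Q t) k * eta t i a k) by rewrite Q_rec; ring.
rewrite normrM ger0_norm // ler_wpM2l // /K mulrDl -mulrA.
rewrite (le_trans (ler_normD _ _)) // lerD //.
  by rewrite (le_trans (ler_normB _ _)) // mulr_natl mulr2n lerD ?T_norm_le ?Q_norm_le.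
rewrite normrM ger0_norm // ler_wpM2l // (le_trans (ler_norm_sum _ _ _)) //.
rewrite mulr_natl -[in X in _ *+ X](card_ord n) -sumr_const ler_sum // => k _.
by rewrite normrM -[leRHS]mulr1 ler_pM //; exact: v_norm_le.
Qed.

Lemma v_step_le t k : `|v t.+1 k - v t k| <= g t * (K * (dist t + B)).
Proof.
apply: le_trans (vmin_lipschitz _ _ _ _) _.
by apply: qnorm_le => [|i a]; rewrite ?Q_step_le // !mulr_ge0 ?K_ge0 ?addr_ge0 ?qnorm_ge0.
Qed.

Lemma errY_step t : g t <= 1 ->
  errY t.+1 <= (1 - g t) * errY t + g t * (rho * dist t + kappa t * (dist t + B)).
Proof.
move=> g1; have [rho0 _] := andP rho01.
have dB0 : 0 <= dist t + B := addr_ge0 (qnorm_ge0 _) (qnorm_ge0 _).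
have g_eta i a : g t * \sum_k vmin a0 (Q t) k * eta t i a k =
    \sum_k v t k * residual t.+1 i a k - \sum_k v t k * residual t i a k.
  by rewrite mulr_sumr -sumrB; apply: eq_bigr => k _; rewrite -mulrBr residual_step mulrCA.
apply: qnorm_le => [|i a].
  apply: addr_ge0; first by apply: mulr_ge0; [rewrite subr_ge0 | exact: qnorm_ge0].
  apply: mulr_ge0 => //; apply: addr_ge0; first exact: mulr_ge0 rho0 (qnorm_ge0 _).
  exact: mulr_ge0 (kappa_ge0 t) dB0.
have -> : qdiff (Y t.+1) Qf i a = (1 - g t) * qdiff (Y t) Qf i a
    + g t * (T (Q t) i a - T Qf i a) - g t * (theta * \sum_k v t k * residual t i a k)
    - theta * \sum_k (v t.+1 k - v t k) * residual t.+1 i a k.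
  rewrite /qdiff /Y Q_rec mulrDr [g t * (theta * _)]mulrCA g_eta T_Qf.
  under [X in _ = _ - theta * X]eq_bigr do rewrite mulrBl.
  rewrite sumrB; ring.
have n1 : `|(1 - g t) * qdiff (Y t) Qf i a| <= (1 - g t) * errY t.
  rewrite normrM ger0_norm ?subr_ge0 //.
  by apply: ler_wpM2l; [rewrite subr_ge0 | exact: qnorm_ge].
have n2 : `|g t * (T (Q t) i a - T Qf i a)| <= g t * (rho * dist t).
  by rewrite normrM ger0_norm // ler_wpM2l.
have n3 : `|g t * (theta * \sum_k v t k * residual t i a k)| <=
    g t * (theta * ((dist t + B) * residual_sum t)).
  rewrite !normrM (ger0_norm (g_ge0 t)) (ger0_norm theta_ge0).
  by do 2!apply: ler_wpM2l => //; exact: noise_term_le.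
have n4 : `|theta * \sum_k (v t.+1 k - v t k) * residual t.+1 i a k| <=
    theta * (g t * (K * (dist t + B)) * residual_sum t.+1).
  rewrite normrM ger0_norm // ler_wpM2l // (le_trans (ler_norm_sum _ _ _)) //.
  apply: le_trans (ler_wpM2l _ (residual_sum_ge t.+1 i a)); last first.
    by rewrite !mulr_ge0 ?K_ge0.
  by rewrite mulr_sumr ler_sum // => k _; rewrite normrM ler_wpM2r ?v_step_le.
have -> : (1 - g t) * errY t + g t * (rho * dist t + kappa t * (dist t + B)) =
    (1 - g t) * errY t + g t * (rho * dist t) + g t * (theta * ((dist t + B) * residual_sum t))
    + theta * (g t * (K * (dist t + B)) * residual_sum t.+1) by rewrite /kappa; ring.
rewrite (le_trans (ler_normB _ _)) // !lerD // (le_trans (ler_normB _ _)) // lerD //.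
by rewrite (le_trans (ler_normD _ _)) // lerD.
Qed.

Theorem stochastic_approximation_cvg i a : (fun t => Q t i a) @ \oo --> Qf i a.
Proof.
have dist_cvg0 : dist @ \oo --> 0.
  apply: (@perturbed_contraction_cvg0 _ errY dist kappa g rho B) => //.
  - exact: qnorm_ge0.
  - by move=> t; exact: qnorm_ge0.
  - by move=> t; exact: qnorm_ge0.
  - exact: kappa_ge0.
  - by apply: filterS g_le1 => t ->; rewrite g_ge0.
  - exact: dist_le_errY.
  - by apply: filterS g_le1 => t; exact: errY_step.
  - exact: kappa_cvg0.
apply/cvgrPdist_le => eps eps0; move/cvgr0Pnorm_le : dist_cvg0 => /(_ eps eps0).
apply: filterS => t; rewrite ger0_norm ?qnorm_ge0 // distrC; apply: le_trans.
exact: (qnorm_ge (qdiff (Q t) Qf)).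
Qed.

End StochasticApproximation.

Lemma natr_bool_sub_le1 (R : realType) (b : bool) (x : R) :
  0 <= x <= 1 -> `|b%:R - x| <= 1.
Proof. by case: b => /andP[x0 x1]; rewrite ?mulr1n ?mulr0n ler_norml; apply/andP; split; lra. Qed.

Section IndicatorNoise.
Variables (R : realType) (n : nat) (q : 'I_n -> R) (k : 'I_n) (c : R).
Hypothesis q_ge0 : forall x, 0 <= q x.
Hypothesis q_sum1 : \sum_x q x = 1.

Lemma indicator_noise_centered : \sum_x q x * (c * ((x == k)%:R - q k)) = 0.
Proof.
rewrite (eq_bigr (fun x => c * (q x * (x == k)%:R) - c * q k * q x)); last by move=> x _; ring.
rewrite sumrB -!mulr_sumr q_sum1 mulr1 (bigD1 k) //= eqxx mulr1 big1 ?addr0 ?subrr //.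
by move=> x /negPf ->; rewrite mulr0.
Qed.

Lemma indicator_noise_variance_le : \sum_x q x * (c * ((x == k)%:R - q k)) ^+ 2 <= c ^+ 2.
Proof.
have qk1 : q k <= 1 by rewrite -q_sum1 (bigD1 k) //= lerDl sumr_ge0.
apply: (@le_trans _ _ (\sum_x q x * c ^+ 2)); last by rewrite -mulr_suml q_sum1 mul1r.
apply: ler_sum => x _.
rewrite ler_wpM2l // exprMn -[leRHS]mulr1 ler_wpM2l ?sqr_ge0 //.
by have := q_ge0 k; case: (x == k); rewrite ?mulr1n ?mulr0n => ?; nra.
Qed.

End IndicatorNoise.

Section SampledNoise.
Variables (R : realType) (d : measure_display) (Omega : measurableType d).
Variables (P : probability Omega R) (n : nat) (A : finType).
Variables (p : A -> 'I_n -> 'rV[R]_n) (J : nat -> 'I_n -> A -> Omega -> 'I_n).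

Hypothesis p_simplex : forall a i, simplex (p a i).
Hypothesis J_measurable : forall t i a k, measurable [set w | J t i a w = k].
Hypothesis J_law : forall t i a k, P [set w | J t i a w = k] = (p a i ord0 k)%:E.
Hypothesis J_indep :
  mutually_independent P (fun tia : nat * 'I_n * A => J tia.1.1 tia.1.2 tia.2).

Lemma sample_iid i a (us : seq nat) (y : nat -> 'I_n) : uniq us ->
  P (\big[setI/setT]_(u <- us) [set w | J u.+1 i a w = y u]) =
  (\prod_(u <- us) p a i ord0 (y u))%:E.
Proof.
move=> us_uniq; have s_uniq : uniq [seq (u.+1, i, a) | u <- us].
  by rewrite map_inj_uniq // => u u' [].
have := J_indep (fun tia => y tia.1.1.-1) s_uniq; rewrite bigcap_seq big_map /=.
by move->; rewrite big_map -prodEFin; apply: eq_bigr => u _; exact: J_law.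
Qed.

Lemma sampled_noise_cvg_ae (gamma : nat -> R) :
  cvgn (series (fun t => gamma t ^+ 2)) ->
  {ae P, forall w i a k,
    cvgn (series (fun t => gamma t.+1 * ((J t.+1 i a w == k)%:R - p a i ord0 k)))}.
Proof.
move=> gamma2; apply: filter_forall => i; apply: filter_forall => a.
apply: filter_forall => k; have [q_ge0 q_sum1] := p_simplex a i.
pose f t x := gamma t.+1 * ((x == k)%:R - p a i ord0 k).
apply: (@partial_sums_cvg_ae _ _ _ P _ (fun t => J t.+1 i a) _ f) => //.
- exact: sample_iid.
- by move=> t; exact: indicator_noise_centered.
apply: (series_le_cvg _ _ _ (is_cvg_series_shiftS gamma2)) => t.
- by apply: sumr_ge0 => x _; rewrite mulr_ge0 ?sqr_ge0.
- exact: sqr_ge0.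
- exact: indicator_noise_variance_le.
Qed.

End SampledNoise.

Lemma vmin_sample_split (R : realType) (n : nat) (A : finType) (a0 : A)
    (Q : qfactor R n A) (q : 'rV[R]_n) j :
  vmin a0 Q j = dot q (vvec a0 Q) + \sum_k vmin a0 Q k * ((j == k)%:R - q ord0 k).
Proof.
rewrite /dot -big_split /= (bigD1 j) //= big1 => [|k /negPf kj].
  by rewrite vvecE eqxx mulr1n addr0; ring.
by rewrite vvecE eq_sym kj mulr0n; ring.
Qed.

Lemma robustQ_step (R : realType) (n : nat) (A : finType) (Omega : Type) (a0 : A)
    (c : 'I_n -> A -> R) (theta : R) (p : A -> 'I_n -> 'rV[R]_n)
    (Uhat : A -> 'I_n -> set 'rV[R]_n) (gamma : nat -> R)
    (J : nat -> 'I_n -> A -> Omega -> 'I_n) (Q0 : qfactor R n A) t w i a :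
  let Q := robustQ a0 c theta Uhat gamma J Q0 in
  Q t.+1 w i a = (1 - gamma t.+1) * Q t w i a + gamma t.+1 *
    (proxy_bellman a0 c theta p Uhat (Q t w) i a +
     theta * \sum_k vmin a0 (Q t w) k * ((J t.+1 i a w == k)%:R - p a i ord0 k)).
Proof. by rewrite /= /proxy_bellman (vmin_sample_split _ _ (p a i)); ring. Qed.

Unset Implicit Arguments.

Theorem theorem2 (R : realType) (d : measure_display) (Omega : measurableType d)
  (P : probability Omega R) (n : nat) (A : finType) (a0 : A)
  (c : 'I_n -> A -> R) (theta : R)
  (p : A -> 'I_n -> 'rV[R]_n) (U Uhat : A -> 'I_n -> set 'rV[R]_n)
  (Qstar : qfactor R n A) (gamma : nat -> R)
  (J : nat -> 'I_n -> A -> Omega -> 'I_n) (Q0 : qfactor R n A) :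
  0 < theta < 1 ->
  (forall a i, simplex (p a i)) ->
  (forall a i, U a i !=set0 /\ compact (U a i)) ->
  (forall a i, [set p a i + x | x in U a i] `<=` simplex) ->
  (forall a i, U a i `<=` Uhat a i /\ Uhat a i !=set0 /\ compact (Uhat a i)) ->
  (* Q* : the robust optimal Q-factors *)
  (forall i a, Qstar i a = c i a + theta *
       support_fun [set p a i + x | x in U a i] (vvec a0 Qstar)) ->
  (* step lengths *)
  (forall t, 0 <= gamma t) ->
  series gamma @ \oo --> +oo ->
  cvgn (series (fun t => gamma t ^+ 2)) ->
  (* samples: J t i a ~ p^a_i, fresh (mutually independent) *)
  (forall t i a k, measurable [set w | J t i a w = k]) ->
  (forall t i a k, P [set w | J t i a w = k] = (p a i ord0 k)%:E) ->
  mutually_independent P (fun tia : nat * 'I_n * A => J tia.1.1 tia.1.2 tia.2) ->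
  let beta := \big[Num.max/0]_(i : 'I_n) \big[Num.max/0]_(a : A)
                beta_of (Uhat a i) (U a i) in
  theta * (1 + beta) < 1 ->
  let eps := theta * beta / (1 - theta * (1 + beta)) in
  {ae P, forall w, exists Q' : qfactor R n A,
     (forall i a, (fun t => robustQ a0 c theta Uhat gamma J Q0 t w i a) @ \oo --> Q' i a) /\
     qnorm (fun i a => Q' i a - Qstar i a) <= eps * qnorm Qstar}.
Proof.
move=> /andP[/ltW theta0 _] p_simplex U_cpt pU_simplex Uhat_cpt Qstar_fix gamma0
  gamma_div gamma2 J_meas J_law J_indep beta contr eps.
have U_neq0 a i := (U_cpt a i).1.
have U_sub a i := (Uhat_cpt a i).1.
have Uhat_bounded a i := compact_entry_bounded (Uhat_cpt a i).2.2.
have rho01 : 0 <= theta * (1 + beta) < 1.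
  by rewrite contr andbT mulr_ge0 // addr_ge0 // beta_max_ge0.
have T_lip : qlipschitz (theta * (1 + beta)) (proxy_bellman a0 c theta p Uhat).
  exact: proxy_bellman_lipschitz.
have [Q' TQ'] := qlipschitz_fixed_point rho01 T_lip.
apply: filterS (sampled_noise_cvg_ae p_simplex J_meas J_law J_indep gamma2) => w noise.
exists Q'; split => [i a|].
  apply: (@stochastic_approximation_cvg _ _ _ a0 _ _ theta (fun t => gamma t.+1)
    (fun t i a k => (J t.+1 i a w == k)%:R - p a i ord0 k)
    (fun t => robustQ a0 c theta Uhat gamma J Q0 t w) _ rho01 theta0 T_lip TQ') => //.
  - by move=> t i' a' k; apply/natr_bool_sub_le1/simplex_entry.
  - exact: sqr_summable_le1.
  - exact: series_shiftS_cvgy.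
  - by move=> t i' a'; exact: robustQ_step.
rewrite /eps mulrAC; apply: (fixed_point_dist_le rho01 T_lip TQ') => [|i a].
  by rewrite !mulr_ge0 ?beta_max_ge0 ?qnorm_ge0.
by rewrite [X in _ - X]Qstar_fix; exact: proxy_robust_bellman_gap.
Qed.
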